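(* Let $q,W$ be positive integers and $a,b,h$ integers with $\gcd(W,b)=\gcd(q,a)=1$. Then $|R^\ast_{W,b}(q,a,h)|\le\gcd(h,q)$.
   Context: $e(z)=e^{2\pi iz}$. $R^\ast_{W,b}(q,a,h)=\sum_{1\le c\le qW,\ \gcd(c,q)=1,\ c\equiv b\ (\mathrm{mod}\ W)}e\big(\frac{ach}{qW}\big)$. Here $\gcd(0,q)=q$. *)

From mathcomp Require Import all_boot all_algebra.
From mathcomp Require Import all_classical all_reals all_analysis.
From mathcomp Require Import complex.
Import GRing.Theory Num.Theory ComplexField.
Local Open Scope ring_scope.

Definition e_ {R : realType} (x : R) : R[i] :=
  (cos (2 * pi * x) +i* sin (2 * pi * x))%C.

Definition Rstar {R : realType} (W : nat) (b : int) (q : nat) (a h : int) : R[i] :=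
  \sum_(1 <= c < (q * W).+1 | coprime c q && (c%:Z == b %[mod W%:Z])%Z)
     e_ ((a * c%:Z * h)%:~R / (q * W)%:R : R).

(* Write c = 1 + t + W u with t < W and u < q.  The congruence c = b (mod W) singles out one t,
   so R* is a unimodular factor times the sum of e(a h u / q) over the u mod q for which
   1 + t + W u is coprime to q: a Ramanujan sum along an arithmetic progression.  Its modulus is
   at most gcd(a h, q) = gcd(h, q), by induction on the modulus n = m p^(j+1) with p prime not
   dividing m.  Coprimality to n is coprimality to m together with non-divisibility by p.  The
   m-periodic part collapses, by orthogonality of the characters mod p^(j+1), to p^(j+1) times a
   sum of modulus m; when p does not divide w, the condition p | c + w k fixes k mod p and leaves
   a sum of modulus m p^j. *)

From mathcomp Require Import all_boot all_algebra.
From mathcomp Require Import all_classical all_reals all_analysis.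
From mathcomp Require Import complex.
From mathcomp Require Import ring lra.
Import order.Order.TTheory GRing.Theory Num.Theory ComplexField.

Lemma big_nat_mul_offset {R : Type} {idx : R} (op : Monoid.law idx) m n (F : nat -> R) :
  \big[op/idx]_(0 <= k < m * n) F k =
  \big[op/idx]_(0 <= u < n) \big[op/idx]_(0 <= t < m) F (t + m * u).
Proof.
rewrite mulnC big_nat_mul; apply: eq_bigr => u _.
by rewrite -[u * m]add0n big_addn mulSn addnK mulnC.
Qed.

Lemma coprimeMDl x y m : coprime (x + y * m) m = coprime x m.
Proof. by rewrite -coprime_modl addnC modnMDl coprime_modl. Qed.

Section AffineMod.
Variables (d c w : nat).
Hypothesis co_wd : coprime w d.

Lemma affine_modn_inj t t' : t < d -> t' < d ->
  c + w * t = c + w * t' %[mod d] -> t = t'.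
Proof.
wlog le_tt' : t t' / t <= t'.
  move=> IH lt_td lt_t'd eq_mod.
  by have [/IH|/ltnW/IH] := leqP t t'; [apply | move=> ->].
move=> _ lt_t'd /eqP; rewrite eqn_modDl eq_sym eqn_mod_dvd; last exact: leq_mul.
rewrite -mulnBr Gauss_dvdr; last by rewrite coprime_sym.
apply: contraTeq => neq_tt'.
rewrite gtnNdvd //; first by rewrite subn_gt0 ltn_neqAle neq_tt'.
exact: leq_ltn_trans (leq_subr _ _) lt_t'd.
Qed.

Lemma affine_modn_surj v : 0 < d -> exists2 t, t < d & c + w * t = v %[mod d].
Proof.
move=> d_gt0; pose f (t : 'I_d) : 'I_d := Ordinal (ltn_pmod (c + w * t) d_gt0).
have f_inj : injective f.
  move=> t t' /(congr1 val) /= eq_mod; apply/val_inj.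
  exact: affine_modn_inj eq_mod.
have [g fK gK] := injF_bij f_inj.
exists (g (Ordinal (ltn_pmod v d_gt0))) => //.
by have /(congr1 val) := gK (Ordinal (ltn_pmod v d_gt0)).
Qed.

End AffineMod.

Local Open Scope ring_scope.

Lemma sum_nat_indicator_pred1 (V : nzRingType) d (P : pred nat) (g : nat -> V) t0 :
  (t0 < d)%N -> (forall t, (t < d)%N -> P t = (t == t0)) ->
  \sum_(0 <= t < d) (P t)%:R * g t = g t0.
Proof.
move=> lt_t0d P_eq; rewrite (bigD1_seq t0) ?mem_index_iota ?iota_uniq //=.
rewrite P_eq // eqxx mul1r big1_seq ?addr0 // => t /andP[neq_tt0].
by rewrite mem_index_iota => /andP[_ lt_td]; rewrite P_eq // (negbTE neq_tt0) mul0r.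
Qed.

Lemma sum_dvd_affine (V : nzRingType) p n c w : prime p -> ~~ (p %| w)%N -> (p %| n)%N ->
  exists k0, forall g : nat -> V,
  \sum_(0 <= k < n) (p %| c + w * k)%N%:R * g k = \sum_(0 <= u < n %/ p) g (k0 + p * u)%N.
Proof.
move=> p_pr p_ndvd_w p_dvd_n; have co_wp : coprime w p by rewrite coprime_sym prime_coprime.
have [k0 lt_k0p k0_root] := @affine_modn_surj p c w co_wp 0 (prime_gt0 p_pr).
exists k0 => g; rewrite -{1}(divnK p_dvd_n) mulnC big_nat_mul_offset.
apply: eq_bigr => u _; apply: sum_nat_indicator_pred1 => // t lt_tp.
rewrite mulnDr addnA mulnCA dvdn_addl ?dvdn_mulr // /dvdn.
apply/eqP/eqP => [root_t | ->]; last by rewrite k0_root mod0n.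
by apply: (@affine_modn_inj p c w co_wp); rewrite // root_t k0_root mod0n.
Qed.

Lemma sum_ndvd_affine (V : nzRingType) p n c w : prime p -> ~~ (p %| w)%N -> (p %| n)%N ->
  \sum_(0 <= u < n) (~~ (p %| c + w * u))%N%:R = (n - n %/ p)%N%:R :> V.
Proof.
move=> p_pr p_ndvd_w p_dvd_n.
have [k0 sum_dvd] := @sum_dvd_affine V p n c w p_pr p_ndvd_w p_dvd_n.
(* The factor [* 1] lets [sum_dvd] apply with [g := fun _ => 1]. *)
have -> : \sum_(0 <= u < n) (~~ (p %| c + w * u))%N%:R =
    \sum_(0 <= u < n) (1 - (p %| c + w * u)%N%:R * 1) :> V.
  by apply: eq_bigr => u _; case: (p %| _)%N; rewrite ?mulr1 ?subr0 ?subrr.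
by rewrite sumrB sum_dvd !sumr_const_nat !subn0 natrB ?leq_div.
Qed.

Section ExponentialSums.
Variable R : realType.

Lemma eD (x y : R) : e_ (x + y) = e_ x * e_ y.
Proof.
rewrite /e_ mulrDr sinD cosD; apply/eqP; rewrite eq_complex /= eqxx /=.
by rewrite addrC.
Qed.

Lemma e0 : e_ (0 : R) = 1.
Proof. by rewrite /e_ mulr0 sin0 cos0. Qed.

Lemma eMn (x : R) n : e_ (x *+ n) = e_ x ^+ n.
Proof. by elim: n => [|n IHn]; rewrite ?mulr0n ?e0 // mulrS eD IHn exprS. Qed.

Lemma norm_e (x : R) : `|e_ x| = 1.
Proof. by rewrite normc_def /= cos2Dsin2 sqrtr1. Qed.

Lemma e_nat n : e_ (n%:R : R) = 1.
Proof.
have e1 : e_ (1 : R) = 1.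
  by rewrite /e_ mulr1 mulr_natl -[_ *+ 2]add0r cosD2pi sinD2pi cos0 sin0.
by rewrite -[n%:R]mulr_natl mulr1 eMn e1 expr1n.
Qed.

Lemma e_int (z : int) : e_ (z%:~R : R) = 1.
Proof.
case: z => n; first exact: e_nat.
rewrite NegzE mulrNz.
by have := eD (- n.+1%:R) n.+1%:R; rewrite addNr e0 e_nat mulr1.
Qed.

Lemma eDz (x : R) (z : int) : e_ (x + z%:~R) = e_ x.
Proof. by rewrite eD e_int mulr1. Qed.

Lemma e_neq1 (r N : nat) : (0 < r < N)%N -> e_ (r%:R / N%:R : R) != 1.
Proof.
case/andP=> r_gt0 lt_rN; set x : R := r%:R / N%:R.
have N_gt0 : (0 < N)%N by apply: leq_ltn_trans lt_rN.
have x_gt0 : 0 < x by rewrite divr_gt0 ?ltr0n.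
have x_lt1 : x < 1 by rewrite ltr_pdivrMr ?mul1r ?ltr_nat ?ltr0n.
have pi_gt0 := pi_gt0 R.
have cos_lt1 (y : R) : 0 < y <= pi -> cos y < 1.
  case/andP=> y_gt0 y_le_pi; rewrite -cos0 ltr_cos // in_itv /= ?lexx ?y_le_pi.
    by rewrite ltW.
  by rewrite ltW // ltW.
apply/negP => /eqP/(congr1 (@complex.Re R)) /= cos_eq1.
have [le_pi|lt_pi] := lerP (2 * pi * x) pi.
  have : 0 < 2 * pi * x <= pi.
    by rewrite le_pi andbT mulr_gt0 // mulr_gt0.
  by move/cos_lt1; rewrite cos_eq1 ltxx.
have : 0 < 2 * pi * (1 - x) <= pi.
  rewrite mulr_gt0 ?mulr_gt0 ?subr_gt0 //=.
  by move: lt_pi; rewrite mulrBr mulr1; lra.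
have -> : 2 * pi * (1 - x) = - (2 * pi * x) + pi *+ 2.
  by rewrite mulrBr mulr1 addrC mulr_natl.
by move/cos_lt1; rewrite cosD2pi cosN cos_eq1 ltxx.
Qed.

Lemma sum_e_div (N a : nat) : (0 < N)%N ->
  \sum_(0 <= u < N) e_ ((a * u)%:R / N%:R : R) = if (N %| a)%N then N%:R else 0.
Proof.
move=> N_gt0; have N_neq0 : (N%:R : R) != 0 by rewrite pnatr_eq0 -lt0n.
set z := e_ (a%:R / N%:R : R).
have eE u : e_ ((a * u)%:R / N%:R : R) = z ^+ u.
  by rewrite -eMn natrM mulrAC mulr_natr.
under eq_bigr => u _ do rewrite eE.
case: ifP => [/dvdnP[k a_eq] | N_ndvd_a].
  have -> : z = 1 by rewrite /z a_eq natrM mulfK ?e_nat.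
  by under eq_bigr do rewrite expr1n; rewrite sumr_const_nat subn0.
have zN1 : z ^+ N = 1 by rewrite /z -eMn -[_ *+ N]mulr_natr divfK ?e_nat.
have z_neq1 : z != 1.
  rewrite /z (divn_eq a N) natrD mulrDl natrM mulfK // eD e_nat mul1r.
  by rewrite e_neq1 // ltn_pmod // lt0n -/(dvdn N a) N_ndvd_a.
have := subrX1 z N; rewrite zN1 subrr => /esym/eqP.
by rewrite mulf_eq0 subr_eq0 (negbTE z_neq1) big_mkord => /eqP.
Qed.

Lemma e_mulz_modz (z : int) (q u : nat) : (0 < q)%N ->
  e_ ((z * u%:Z)%:~R / q%:R : R) = e_ (((z %% q%:Z)%Z * u%:Z)%:~R / q%:R).
Proof.
move=> q_gt0; have q_neq0 : (q%:R : R) != 0 by rewrite pnatr_eq0 -lt0n.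
have -> : (z * u%:Z)%:~R / q%:R =
    ((z %% q%:Z)%Z * u%:Z)%:~R / q%:R + ((z %/ q%:Z)%Z * u%:Z)%:~R :> R.
  by rewrite {1}(divz_eq z q) !(rmorphD, rmorphM) /= !pmulrn; field.
by rewrite eDz.
Qed.

Lemma sum_periodic_e m N a (f : nat -> R[i]) : (0 < m)%N -> (0 < N)%N ->
  (forall k, f (k + m)%N = f k) ->
  \sum_(0 <= k < m * N) f k * e_ ((a * k)%:R / (m * N)%:R) =
  if (N %| a)%N then N%:R * \sum_(0 <= r < m) f r * e_ ((a %/ N * r)%:R / m%:R) else 0.
Proof.
move=> m_gt0 N_gt0 f_per.
have m_neq0 : (m%:R : R) != 0 by rewrite pnatr_eq0 -lt0n.
have N_neq0 : (N%:R : R) != 0 by rewrite pnatr_eq0 -lt0n.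
have f_perM r u : f (r + m * u)%N = f r.
  by elim: u => [|u IHu]; rewrite ?muln0 ?addn0 // mulnS addnCA addnC f_per.
have eE r u : e_ ((a * (r + m * u))%:R / (m * N)%:R : R) =
    e_ ((a * r)%:R / (m * N)%:R) * e_ ((a * u)%:R / N%:R).
  by rewrite -eD !(natrM, natrD); congr e_; field; rewrite m_neq0 N_neq0.
rewrite big_nat_mul_offset.
under eq_bigr => u _ do under eq_bigr => r _ do rewrite f_perM eE mulrA.
under eq_bigr => u _ do rewrite -mulr_suml.
rewrite -mulr_sumr sum_e_div //; case: ifP => [/dvdnP[b ->] | _]; last by rewrite mulr0.
rewrite mulnK // mulrC; congr (_ * _); apply: eq_bigr => r _.
by rewrite !natrM; congr (_ * e_ _); field; rewrite m_neq0 N_neq0.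
Qed.

(* For [c = 0] and [w = 1] this is the Ramanujan sum [c_n(a)]. *)
Definition ramanujan_ap (n c w a : nat) : R[i] :=
  \sum_(0 <= k < n) (coprime (c + w * k) n)%:R * e_ ((a * k)%:R / n%:R).

Lemma sum_coprime_e_dilate m N c w a : (0 < m)%N -> (0 < N)%N ->
  \sum_(0 <= k < m * N) (coprime (c + w * k) m)%:R * e_ ((a * k)%:R / (m * N)%:R) =
  if (N %| a)%N then N%:R * ramanujan_ap m c w (a %/ N) else 0.
Proof.
move=> m_gt0 N_gt0; apply: sum_periodic_e => // k.
by rewrite mulnDr addnA coprimeMDl.
Qed.

Section InductionStep.
Variables m p j : nat.
Hypotheses (m_gt0 : (0 < m)%N) (p_pr : prime p) (co_pm : coprime p m).
Hypothesis IHm : forall c w a, `|ramanujan_ap m c w a| <= (gcdn a m)%:R.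

Lemma norm_sum_coprime_e_le N c w a : (0 < N)%N ->
  `|\sum_(0 <= k < m * N) (coprime (c + w * k) m)%:R * e_ ((a * k)%:R / (m * N)%:R : R)|
    <= (gcdn a (m * N))%:R.
Proof.
move=> N_gt0; rewrite sum_coprime_e_dilate //.
case: ifP => [/dvdnP[b ->] | _]; last by rewrite normr0 ler0n.
rewrite mulnK // normrM normr_nat -muln_gcdl mulnC natrM.
by rewrite ler_wpM2l ?ler0n.
Qed.

Local Notation n := (m * p ^ j.+1)%N.

Lemma coprime_mulpexp x : coprime x n = coprime x m && ~~ (p %| x)%N.
Proof. by rewrite coprimeMr coprime_pexpr // (coprime_sym x p) (prime_coprime _ p_pr). Qed.

Lemma norm_ramanujan_ap_step_dvdw c w a : (p %| w)%N ->
  `|ramanujan_ap n c w a| <= (gcdn a n)%:R.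
Proof.
move=> p_dvd_w; rewrite /ramanujan_ap; have [p_dvd_c | p_ndvd_c] := boolP (p %| c)%N.
  rewrite big1 ?normr0 // => k _.
  by rewrite coprime_mulpexp dvdn_add ?dvdn_mulr // andbF mul0r.
under eq_bigr => k _ do rewrite coprime_mulpexp dvdn_addl ?dvdn_mulr // p_ndvd_c andbT.
by apply: norm_sum_coprime_e_le; rewrite expn_gt0 prime_gt0.
Qed.

Lemma norm_ramanujan_ap_step_dvda c w a : ~~ (p %| w)%N -> (p ^ j.+1 %| a)%N ->
  `|ramanujan_ap n c w a| <= (gcdn a n)%:R.
Proof.
move=> p_ndvd_w /dvdnP[b ->]; set P := (p ^ j.+1)%N.
have P_gt0 : (0 < P)%N by rewrite expn_gt0 prime_gt0.
have m_neq0 : (m%:R : R) != 0 by rewrite pnatr_eq0 -lt0n.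
have P_neq0 : (P%:R : R) != 0 by rewrite pnatr_eq0 -lt0n.
have eE k : e_ ((b * P * k)%:R / n%:R) = e_ ((b * k)%:R / m%:R) :> R[i].
  by rewrite !natrM; congr e_; field; rewrite m_neq0 P_neq0.
have eEper t u : e_ ((b * (t + m * u))%:R / m%:R) = e_ ((b * t)%:R / m%:R) :> R[i].
  have -> : (b * (t + m * u))%:R / m%:R = (b * t)%:R / m%:R + (b * u)%:R :> R.
    by rewrite mulnDr mulnCA !natrD !natrM; field.
  by rewrite eD e_nat mulr1.
have termE t u : (coprime (c + w * (t + m * u)) n)%:R * e_ ((b * P * (t + m * u))%:R / n%:R) =
    (coprime (c + w * t) m)%:R * e_ ((b * t)%:R / m%:R) *
    (~~ (p %| c + w * t + w * m * u))%N%:R :> R[i].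
  have -> : (c + w * (t + m * u) = c + w * t + w * m * u)%N by ring.
  rewrite coprime_mulpexp eE eEper [in X in coprime X _]mulnAC coprimeMDl.
  by case: (coprime _ m); rewrite ?mul0r //= mul1r mulrC.
rewrite /ramanujan_ap (big_nat_mul_offset _ m P) exchange_big /=.
under eq_bigr => t _ do under eq_bigr => u _ do rewrite termE.
have pP : (p %| P)%N by rewrite dvdn_exp.
have p_ndvd_wm : ~~ (p %| w * m)%N.
  by rewrite Euclid_dvdM // negb_or p_ndvd_w -prime_coprime.
under eq_bigr => t _ do rewrite -mulr_sumr sum_ndvd_affine //.
rewrite -mulr_suml normrM normr_nat -/(ramanujan_ap m c w b).
apply: le_trans (ler_wpM2r (ler0n _ _) (IHm c w b)) _.
by rewrite -natrM ler_nat -muln_gcdl leq_mul // leq_subr.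
Qed.

Lemma norm_ramanujan_ap_step_ndvda c w a : ~~ (p %| w)%N -> ~~ (p ^ j.+1 %| a)%N ->
  `|ramanujan_ap n c w a| <= (gcdn a n)%:R.
Proof.
move=> p_ndvd_w P_ndvd_a.
have p_gt0 := prime_gt0 p_pr; have pj_gt0 : (0 < p ^ j)%N by rewrite expn_gt0 p_gt0.
have m_neq0 : (m%:R : R) != 0 by rewrite pnatr_eq0 -lt0n.
have pj_neq0 : ((p ^ j)%:R : R) != 0 by rewrite pnatr_eq0 -lt0n.
have p_neq0 : (p%:R : R) != 0 by rewrite pnatr_eq0 -lt0n.
(* The first of the two resulting sums vanishes because p^(j+1) does not divide a. *)
have indE x : (coprime x n)%:R =
    (coprime x m)%:R - (p %| x)%N%:R * (coprime x m)%:R :> R[i].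
  rewrite coprime_mulpexp; case: (coprime x m); case: (p %| x)%N;
  by rewrite ?(mulr1, mul0r, mulr0, subrr, subr0).
rewrite /ramanujan_ap; under eq_bigr => k _ do rewrite indE mulrBl -mulrA.
rewrite sumrB sum_coprime_e_dilate ?expn_gt0 ?p_gt0 // (negbTE P_ndvd_a) sub0r normrN.
have p_dvd_n : (p %| n)%N by rewrite dvdn_mull // dvdn_exp.
have [k0 ->] := @sum_dvd_affine R[i] p n c w p_pr p_ndvd_w p_dvd_n.
have termE u : (coprime (c + w * (k0 + p * u)) m)%:R * e_ ((a * (k0 + p * u))%:R / n%:R) =
    e_ ((a * k0)%:R / n%:R) * ((coprime (c + w * k0 + w * p * u) m)%:R *
    e_ ((a * u)%:R / (m * p ^ j)%:R)) :> R[i].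
  rewrite mulnDr addnA mulnA mulrCA -eD; congr (_ * e_ _).
  by rewrite expnSr !(natrM, natrD); field; rewrite m_neq0 pj_neq0 p_neq0.
have -> : (n %/ p = m * p ^ j)%N by rewrite expnSr mulnA mulnK.
under eq_bigr => u _ do rewrite termE.
rewrite -mulr_sumr normrM norm_e mul1r.
apply: le_trans (norm_sum_coprime_e_le _ _ _ _ pj_gt0) _.
rewrite ler_nat dvdn_leq ?gcdn_gt0 ?muln_gt0 ?m_gt0 ?expn_gt0 ?p_gt0 ?orbT //.
by rewrite dvdn_gcd dvdn_gcdl (dvdn_trans (dvdn_gcdr _ _)) // dvdn_mul // dvdn_exp2l.
Qed.

Lemma norm_ramanujan_ap_step c w a : `|ramanujan_ap n c w a| <= (gcdn a n)%:R.
Proof.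
have [|p_ndvd_w] := boolP (p %| w)%N; first exact: norm_ramanujan_ap_step_dvdw.
have [|P_ndvd_a] := boolP (p ^ j.+1 %| a)%N.
  exact: norm_ramanujan_ap_step_dvda.
exact: norm_ramanujan_ap_step_ndvda.
Qed.

End InductionStep.

Lemma norm_ramanujan_ap_le n c w a : (0 < n)%N ->
  `|ramanujan_ap n c w a| <= (gcdn a n)%:R.
Proof.
elim/ltn_ind: n c w a => n IHn c w a n_gt0.
have [n_le1 | n_gt1] := leqP n 1.
  have -> : n = 1%N by apply/anti_leq; rewrite n_le1 n_gt0.
  by rewrite /ramanujan_ap big_nat1 coprimen1 muln0 mul0r e0 mulr1 gcdn1 normr1.
have p_pr : prime (pdiv n) := pdiv_prime n_gt1.
have [m co_pm n_eq] := pfactor_coprime p_pr n_gt0.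
have : (0 < logn (pdiv n) n)%N by rewrite logn_gt0 mem_primes p_pr n_gt0 pdiv_dvd.
move: n_eq; case: (logn _ n) => // j n_eq _; rewrite n_eq in IHn n_gt0 *.
have m_gt0 : (0 < m)%N by move: n_gt0; rewrite muln_gt0 => /andP[].
apply: norm_ramanujan_ap_step => // c' w' a'; apply: IHn => //.
by rewrite ltn_Pmulr // -[1%N](expn0 (pdiv n)) ltn_exp2l ?prime_gt1.
Qed.

Lemma Rstar_ramanujan_ap (W q : nat) (b a h : int) : (0 < q)%N -> (0 < W)%N ->
  exists c (x : R), Rstar W b q a h = e_ x * ramanujan_ap q c W `|((a * h) %% q%:Z)%Z|%N.
Proof.
move=> q_gt0 W_gt0; set al := `|((a * h) %% q%:Z)%Z|%N.
have alE : ((a * h) %% q%:Z)%Z = al%:Z by rewrite gez0_abs // modz_ge0 // eqz_nat -lt0n.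
set r := `|(b %% W%:Z)%Z|%N.
have rE : (b %% W%:Z)%Z = r%:Z by rewrite gez0_abs // modz_ge0 // eqz_nat -lt0n.
have congrE x : (x%:Z == b %[mod W%:Z])%Z = (x %% W == r)%N by rewrite rE modz_nat eqz_nat.
have [t0 lt_t0W t0E] := @affine_modn_surj W 1 1 (coprime1n W) r W_gt0.
have lt_rW : (r < W)%N by rewrite -ltz_nat -rE ltz_pmod.
rewrite (modn_small lt_rW) in t0E.
have pickE u t : (t < W)%N -> ((t + W * u).+1 %% W == r)%N = (t == t0).
  move=> lt_tW; have -> : ((t + W * u).+1 = u * W + (1 + 1 * t))%N by ring.
  rewrite modnMDl; apply/eqP/eqP => [tE | ->] //.
  by apply: (@affine_modn_inj W 1 1); rewrite ?coprime1n // tE t0E.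
have if_andE (A B : bool) (x : R[i]) : (if A && B then x else 0) = B%:R * (A%:R * x).
  by case: A; case: B; rewrite ?mul1r ?mul0r.
exists t0.+1, ((a * t0.+1%:Z * h)%:~R / (q * W)%:R).
rewrite /Rstar big_add1 /= big_mkcond /=.
under eq_bigr => i _ do rewrite congrE if_andE.
rewrite mulnC (big_nat_mul_offset _ W q).
under eq_bigr => u _ do rewrite (sum_nat_indicator_pred1 _ _ _ _ _ lt_t0W (pickE u)).
have q_neq0 : (q%:R : R) != 0 by rewrite pnatr_eq0 -lt0n.
have W_neq0 : (W%:R : R) != 0 by rewrite pnatr_eq0 -lt0n.
rewrite /ramanujan_ap mulr_sumr; apply: eq_bigr => u _; rewrite -addSn mulrCA.
have -> : (a * (t0.+1 + W * u)%N%:Z * h)%:~R / (W * q)%:R =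
    (a * t0.+1%:Z * h)%:~R / (W * q)%:R + ((a * h) * u%:Z)%:~R / q%:R :> R.
  by rewrite PoszD PoszM !(rmorphD, rmorphM) /= -!pmulrn; field; rewrite q_neq0 W_neq0.
by rewrite eD e_mulz_modz // alE -PoszM -pmulrn.
Qed.
End ExponentialSums.

Theorem lemma2p11 (R : realType) (q W : nat) (a b h : int) :
  (0 < q)%N -> (0 < W)%N ->
  coprimez W%:Z b -> coprimez q%:Z a ->
  `| @Rstar R W b q a h | <= (gcdz h q%:Z)%:~R.
Proof.
move=> q_gt0 W_gt0 _ co_qa.
have [c [x ->]] := @Rstar_ramanujan_ap R W q b a h q_gt0 W_gt0.
rewrite normrM norm_e mul1r.
have -> : gcdz h q = gcdz ((a * h) %% q)%Z q.
  by rewrite gcdz_modl [RHS]gcdzC Gauss_gcdzr // gcdzC.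
exact: norm_ramanujan_ap_le.
Qed.
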